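(* Let $(X,d)$ be a complete metric space and let $\{f_{\eta_k}:\eta_k\in B^{[k]},\,k\in\mathbb{N}\}$ be a binary tree of continuous maps $f_{\eta_k}:X\to X$. Fix an infinite code $\eta\in B^{[\infty]}$ and consider the sequence of maps $\{f_{\tau_k\eta}\}_{k\in\mathbb{N}}$ along the path $P_\eta$. Assume there is a nonempty compact set $C_{P_\eta}\subseteq X$ with $f_{\tau_k\eta}(C_{P_\eta})\subseteq C_{P_\eta}$ for all $k\in\mathbb{N}$, and that each $f_{\tau_k\eta}$ is Lipschitz with Lipschitz constant $s_{\tau_k\eta}$. If $$\sum_{k=1}^\infty\prod_{i=1}^k s_{\tau_i\eta}<\infty,$$ then for every $x\in C_{P_\eta}$ the limit $$\gamma(\eta):=\lim_{k\to\infty} f_{\tau_1\eta}\circ f_{\tau_2\eta}\circ\cdots\circ f_{\tau_k\eta}(x)$$ exists, and it is the same element of $C_{P_\eta}$ for all $x\in C_{P_\eta}$.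
   Context: $B^{[k]}=\{1,2\}^k$ is the set of binary codes $\eta_k=(i_1i_2\ldots i_k)$ of length $k$, and $B^{[\infty]}=\{1,2\}^{\mathbb{N}}$ the set of infinite codes $\eta=(i_1i_2\ldots)$. For $\eta\in B^{[\infty]}$ (or a finite code of length $>\ell$), the truncation $\tau_\ell\eta=(i_1\ldots i_\ell)\in B^{[\ell]}$. A binary tree of maps assigns to each finite code $\eta_k$ (all $k\ge 1$) a continuous map $f_{\eta_k}:X\to X$. The path $P_\eta$ determined by $\eta$ is the sequence of codes $(\tau_1\eta,\tau_2\eta,\ldots)$. For $f:X\to X$, $\mathrm{Lip}(f)=\sup_{x\neq y}d(f(x),f(y))/d(x,y)$. *)

From Stdlib Require Import Reals List.
Open Scope R_scope.

Definition is_metric {X : Type} (d : X -> X -> R) : Prop :=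
  (forall x y, 0 <= d x y) /\
  (forall x y, d x y = 0 <-> x = y) /\
  (forall x y, d x y = d y x) /\
  (forall x y z, d x z <= d x y + d y z).

Definition converges_to {X : Type} (d : X -> X -> R) (u : nat -> X) (l : X) : Prop :=
  forall eps, eps > 0 -> exists N : nat, forall n, (n >= N)%nat -> d (u n) l < eps.

Definition cauchy_seq {X : Type} (d : X -> X -> R) (u : nat -> X) : Prop :=
  forall eps, eps > 0 -> exists N : nat,
    forall m n, (m >= N)%nat -> (n >= N)%nat -> d (u m) (u n) < eps.

Definition complete_metric {X : Type} (d : X -> X -> R) : Prop :=
  forall u : nat -> X, cauchy_seq d u -> exists l, converges_to d u l.

Definition continuous_map {X : Type} (d : X -> X -> R) (g : X -> X) : Prop :=
  forall x eps, eps > 0 -> exists delta, delta > 0 /\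
    forall y, d x y < delta -> d (g x) (g y) < eps.

Definition open_set {X : Type} (d : X -> X -> R) (U : X -> Prop) : Prop :=
  forall x, U x -> exists r, r > 0 /\ forall y, d x y < r -> U y.

Definition compact_set {X : Type} (d : X -> X -> R) (C : X -> Prop) : Prop :=
  forall (I : Type) (U : I -> X -> Prop),
    (forall i, open_set d (U i)) ->
    (forall x, C x -> exists i, U i x) ->
    exists l : list I, forall x, C x -> exists i, In i l /\ U i x.

(* Finite binary codes are lists of booleans (false ~ 1, true ~ 2);
   infinite codes are functions nat -> bool; tau k eta = (i_1 ... i_k). *)
Definition tau (k : nat) (eta : nat -> bool) : list bool := map eta (seq 0 k).

(* tree_comp f eta k x = f_{tau_1 eta} o ... o f_{tau_k eta} (x). *)
Fixpoint tree_comp {X : Type} (f : list bool -> X -> X) (eta : nat -> bool)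
    (k : nat) (x : X) : X :=
  match k with
  | O => x
  | S k' => tree_comp f eta k' (f (tau (S k') eta) x)
  end.

Fixpoint prod_s (s : list bool -> R) (eta : nat -> bool) (k : nat) : R :=
  match k with
  | O => 1
  | S k' => prod_s s eta k' * s (tau (S k') eta)
  end.

From Stdlib Require Import Reals List Lra Lia Psatz Classical.
Open Scope R_scope.

(* Write T_k = f_{tau_1 eta} o ... o f_{tau_k eta} and P_k for the
   product s_{tau_1 eta} ... s_{tau_k eta}.  Then
   - T_k is P_k-Lipschitz and maps the invariant compact set C into itself;
   - C is bounded, of diameter at most some D, so consecutive points of an
     orbit in C satisfy d (T_k x) (T_{k+1} x) <= D * P_k;
   - summability of P_k makes the orbit of a point x0 in C a Cauchy sequence,
     which converges in the complete space to some g, and g lies in C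
     because compact sets are closed under limits;
   - for any other x in C, d (T_k x) (T_k x0) <= D * P_k tends to 0 since the
     terms of a convergent series do, so the orbit of x converges to g too. *)

Lemma list_upper_bound (l : list R) : exists M, forall r, In r l -> r <= M.
Proof.
  induction l as [|a l [M HM]].
  - exists 0. intros r [].
  - exists (Rmax a M). intros r [<-|Hr].
    + apply Rmax_l.
    + eapply Rle_trans; [apply HM; exact Hr | apply Rmax_r].
Qed.

Lemma list_positive_lower_bound (l : list R) :
  exists m, 0 < m /\ forall r, In r l -> 0 < r -> m <= r.
Proof.
  induction l as [|a l [m [Hm HM]]].
  - exists 1. split; [lra | intros r []].
  - destruct (Rlt_dec 0 a) as [Ha|Ha].
    + exists (Rmin a m). split; [apply Rmin_pos; assumption |].
      intros r [<-|Hr] Hr0; [apply Rmin_l |].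
      eapply Rle_trans; [apply Rmin_r | apply HM; assumption].
    + exists m. split; [exact Hm |].
      intros r [<-|Hr] Hr0; [lra | apply HM; assumption].
Qed.

Lemma series_terms_cv_0 (a : nat -> R) (L : R) :
  Un_cv (sum_f_R0 a) L -> Un_cv a 0.
Proof.
  intros HL eps Heps.
  destruct (HL (eps / 2) ltac:(lra)) as [N HN].
  exists (S N). intros [|n] Hn; [lia |].
  unfold R_dist in *.
  pose proof (HN (S n) ltac:(lia)) as HSn. pose proof (HN n ltac:(lia)) as Hn'.
  change (sum_f_R0 a (S n)) with (sum_f_R0 a n + a (S n)) in HSn.
  rewrite Rminus_0_r.
  apply Rabs_def2 in HSn as [HSn1 HSn2]. apply Rabs_def2 in Hn' as [Hn'1 Hn'2].
  apply Rabs_def1; lra.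
Qed.

Lemma shifted_series_terms_cv_0 (a : nat -> R) (L : R) :
  Un_cv (sum_f_R0 (fun k => a (S k))) L -> Un_cv a 0.
Proof.
  intros HL. apply (CV_shift _ 1). intros eps Heps.
  destruct (series_terms_cv_0 _ L HL eps Heps) as [N HN].
  exists N. intros n Hn. rewrite Nat.add_1_r. exact (HN n Hn).
Qed.

Section MetricSpace.

Context {X : Type} {d : X -> X -> R} (Hmet : is_metric d).

Lemma dist_nonneg x y : 0 <= d x y.
Proof. exact (proj1 Hmet x y). Qed.

Lemma dist_refl x : d x x = 0.
Proof. exact (proj2 (proj1 (proj2 Hmet) x x) eq_refl). Qed.

Lemma dist_eq0 x y : d x y = 0 -> x = y.
Proof. exact (proj1 (proj1 (proj2 Hmet) x y)). Qed.

Lemma dist_sym x y : d x y = d y x.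
Proof. exact (proj1 (proj2 (proj2 Hmet)) x y). Qed.

Lemma dist_triangle x y z : d x z <= d x y + d y z.
Proof. exact (proj2 (proj2 (proj2 Hmet)) x y z). Qed.

(* A nonempty compact set has finite diameter: cover it by the open balls
   around one of its points and keep the largest radius of a finite subcover. *)
Lemma compact_diameter_bound (C : X -> Prop) :
  (exists x0, C x0) -> compact_set d C ->
  exists D, 0 <= D /\ forall y z, C y -> C z -> d y z <= D.
Proof.
  intros [x0 Hx0] Hcpt.
  destruct (Hcpt R (fun r y => d x0 y < r)) as [l Hl].
  - intros r y Hy. exists (r - d x0 y). split; [lra |].
    intros z Hz. pose proof (dist_triangle x0 y z). lra.
  - intros y _. exists (d x0 y + 1). lra.
  - destruct (list_upper_bound l) as [M HM].
    assert (Hball : forall y, C y -> d x0 y < M).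
    { intros y Hy. destruct (Hl y Hy) as [r [Hr Hyr]].
      specialize (HM r Hr). lra. }
    exists (2 * M). split.
    + pose proof (Hball x0 Hx0). pose proof (dist_nonneg x0 x0). lra.
    + intros y z Hy Hz.
      pose proof (dist_triangle y x0 z). rewrite (dist_sym y x0) in *.
      pose proof (Hball y Hy). pose proof (Hball z Hz). lra.
Qed.

(* A compact set contains the limits of its sequences: if the limit g were
   outside, the sets {y | 0 < r < d g y} would cover the compact set, and a
   finite subcover would keep it at positive distance from g. *)
Lemma compact_limit_closed (C : X -> Prop) (u : nat -> X) (g : X) :
  compact_set d C -> (forall n, C (u n)) -> converges_to d u g -> C g.
Proof.
  intros Hcpt HuC Hu.
  destruct (classic (C g)) as [Hg | Hg]; [exact Hg | exfalso].
  destruct (Hcpt R (fun r y => 0 < r /\ r < d g y)) as [l Hl].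
  - intros r y [Hr Hry]. exists (d g y - r). split; [lra |].
    intros z Hz. split; [exact Hr |].
    pose proof (dist_triangle g z y). rewrite (dist_sym z y) in *. lra.
  - intros y Hy. exists (d g y / 2).
    assert (Hgy : d g y <> 0) by (intro E; apply Hg; rewrite (dist_eq0 _ _ E); exact Hy).
    pose proof (dist_nonneg g y). lra.
  - destruct (list_positive_lower_bound l) as [m [Hm Hml]].
    destruct (Hu m Hm) as [N HN]. specialize (HN N (le_n N)).
    destruct (Hl (u N) (HuC N)) as [r [Hr [Hr0 Hrd]]].
    specialize (Hml r Hr Hr0). rewrite dist_sym in Hrd. lra.
Qed.

(* A sequence whose steps are dominated by c times the terms of a convergent
   series is Cauchy; the distance between u m and u (m + j) is bounded by
   the corresponding block of the series. *)
Lemma cauchy_of_summable_steps (u : nat -> X) (a : nat -> R) (c : R) :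
  0 <= c -> (exists L, Un_cv (sum_f_R0 a) L) ->
  (forall n, d (u n) (u (S n)) <= c * a n) -> cauchy_seq d u.
Proof.
  intros Hc [L HL] Hstep.
  set (Q := sum_f_R0 a).
  assert (Hblock : forall m j, d (u (S m)) (u (S (m + j))) <= c * (Q (m + j)%nat - Q m)).
  { intros m j. induction j as [|j IH].
    - rewrite Nat.add_0_r, dist_refl. lra.
    - rewrite Nat.add_succ_r.
      change (Q (S (m + j))) with (Q (m + j)%nat + a (S (m + j))).
      pose proof (dist_triangle (u (S m)) (u (S (m + j))) (u (S (S (m + j))))).
      pose proof (Hstep (S (m + j))). lra. }
  assert (HQ : Cauchy_crit Q) by (apply CV_Cauchy; exists L; exact HL).
  intros eps Heps.
  destruct (HQ (eps / (c + 1)) ltac:(apply Rdiv_lt_0_compat; lra)) as [N HN].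
  assert (Hordered : forall m n, (N <= m <= n)%nat -> d (u (S m)) (u (S n)) < eps).
  { intros m n Hmn. replace n with (m + (n - m))%nat by lia.
    specialize (HN (m + (n - m))%nat m ltac:(lia) ltac:(lia)). unfold R_dist in HN.
    pose proof (Rle_abs (Q (m + (n - m))%nat - Q m)).
    assert (Hce : c * (eps / (c + 1)) < eps).
    { apply (Rmult_lt_reg_r (c + 1)); [lra |].
      field_simplify; [lra | lra]. }
    pose proof (Hblock m (n - m)%nat). nra. }
  exists (S N). intros [|m] [|n] Hm Hn; try lia.
  destruct (Nat.le_gt_cases m n).
  - apply Hordered; lia.
  - rewrite dist_sym. apply Hordered; lia.
Qed.

Lemma cauchy_seq_shift (u : nat -> X) :
  cauchy_seq d (fun n => u (S n)) -> cauchy_seq d u.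
Proof.
  intros Hu eps Heps. destruct (Hu eps Heps) as [N HN].
  exists (S N). intros [|m] [|n] Hm Hn; try lia.
  apply HN; lia.
Qed.

Lemma converges_of_close (u v : nat -> X) (g : X) (b : nat -> R) (c : R) :
  0 <= c -> converges_to d v g -> Un_cv b 0 ->
  (forall n, d (u n) (v n) <= c * b n) -> converges_to d u g.
Proof.
  intros Hc Hv Hb Huv eps Heps.
  destruct (Hv (eps / 2) ltac:(lra)) as [N1 HN1].
  destruct (Hb (eps / (2 * (c + 1))) ltac:(apply Rdiv_lt_0_compat; lra)) as [N2 HN2].
  exists (Nat.max N1 N2). intros n Hn.
  specialize (HN1 n ltac:(lia)). specialize (HN2 n ltac:(lia)).
  unfold R_dist in HN2. rewrite Rminus_0_r in HN2.
  pose proof (Rle_abs (b n)).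
  assert (Hce : c * (eps / (2 * (c + 1))) <= eps / 2).
  { apply (Rmult_le_reg_r (2 * (c + 1))); [lra |].
    field_simplify; [lra | lra]. }
  pose proof (dist_triangle (u n) (v n) g). pose proof (Huv n). nra.
Qed.

End MetricSpace.

Section TreeComposition.

Context {X : Type} {d : X -> X -> R} {f : list bool -> X -> X}
  {eta : nat -> bool} {s : list bool -> R} {C : X -> Prop}.
Hypothesis Hs_nonneg : forall k, (k >= 1)%nat -> 0 <= s (tau k eta).

Lemma prod_s_nonneg k : 0 <= prod_s s eta k.
Proof.
  induction k as [|k IH]; simpl; [lra |].
  apply Rmult_le_pos; [exact IH | apply Hs_nonneg; lia].
Qed.

Lemma tree_comp_lipschitz :
  (forall k, (k >= 1)%nat -> forall x y,
     d (f (tau k eta) x) (f (tau k eta) y) <= s (tau k eta) * d x y) ->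
  forall k x y,
    d (tree_comp f eta k x) (tree_comp f eta k y) <= prod_s s eta k * d x y.
Proof.
  intros Hlip k. induction k as [|k IH]; intros x y; simpl; [lra |].
  eapply Rle_trans; [apply IH |].
  rewrite Rmult_assoc. apply Rmult_le_compat_l; [apply prod_s_nonneg |].
  apply Hlip; lia.
Qed.

Lemma tree_comp_invariant :
  (forall k, (k >= 1)%nat -> forall x, C x -> C (f (tau k eta) x)) ->
  forall k x, C x -> C (tree_comp f eta k x).
Proof.
  intros HCinv k. induction k as [|k IH]; intros x Hx; simpl; [exact Hx |].
  apply IH, HCinv; [lia | exact Hx].
Qed.

Lemma tree_comp_orbits_close (D : R) :
  (forall k, (k >= 1)%nat -> forall x y,
     d (f (tau k eta) x) (f (tau k eta) y) <= s (tau k eta) * d x y) ->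
  (forall y z, C y -> C z -> d y z <= D) ->
  forall k x y, C x -> C y ->
    d (tree_comp f eta k x) (tree_comp f eta k y) <= D * prod_s s eta k.
Proof.
  intros Hlip HD k x y Hx Hy. rewrite Rmult_comm.
  eapply Rle_trans; [apply (tree_comp_lipschitz Hlip) |].
  apply Rmult_le_compat_l; [apply prod_s_nonneg | apply HD; assumption].
Qed.

End TreeComposition.

Theorem mainTheorem1 (X : Type) (d : X -> X -> R)
  (Hmet : is_metric d) (Hcomplete : complete_metric d)
  (f : list bool -> X -> X)
  (Hcont : forall c : list bool, (length c >= 1)%nat -> continuous_map d (f c))
  (eta : nat -> bool) (C : X -> Prop)
  (HCne : exists x, C x) (HCcpt : compact_set d C)
  (HCinv : forall k, (k >= 1)%nat -> forall x, C x -> C (f (tau k eta) x))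
  (s : list bool -> R)
  (Hs_nonneg : forall k, (k >= 1)%nat -> 0 <= s (tau k eta))
  (Hlip : forall k, (k >= 1)%nat -> forall x y,
            d (f (tau k eta) x) (f (tau k eta) y) <= s (tau k eta) * d x y)
  (Hsum : exists L, Un_cv (fun n => sum_f_R0 (fun k => prod_s s eta (S k)) n) L) :
  exists g : X, C g /\
    forall x, C x -> converges_to d (fun k => tree_comp f eta k x) g.
Proof.
  destruct (compact_diameter_bound Hmet C HCne HCcpt) as [D [HD0 HD]].
  pose proof (tree_comp_orbits_close Hs_nonneg D Hlip HD) as Hclose.
  pose proof (tree_comp_invariant HCinv) as HTC.
  destruct HCne as [x0 Hx0].
  assert (Hcauchy : cauchy_seq d (fun k => tree_comp f eta k x0)).
  { apply cauchy_seq_shift.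
    apply (cauchy_of_summable_steps Hmet _ (fun k => prod_s s eta (S k)) D HD0 Hsum).
    intros k. apply (Hclose (S k) x0); [exact Hx0 | apply HCinv; [lia | exact Hx0]]. }
  destruct (Hcomplete _ Hcauchy) as [g Hg].
  exists g. split.
  - apply (compact_limit_closed Hmet C (fun k => tree_comp f eta k x0) g HCcpt); [| exact Hg].
    intros k. apply HTC. exact Hx0.
  -
    intros x Hx. destruct Hsum as [L HL].
    apply (converges_of_close Hmet _ _ g (prod_s s eta) D HD0 Hg
             (shifted_series_terms_cv_0 _ L HL)).
    intros k. apply Hclose; assumption.
Qed.
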